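(* Let $(Z,Z_{ac},h)$ be a normal accretive operator space and let $\nu$ be a matrix gauge on $Z$ which induces $(Z,Z_{ac},h)$. Then $\nu_n(z)\le\nu_{max}^n(z)$ for every $n$ and every $z\in M_n(Z)$, where $\nu_{max}^n(z)=\inf\{h_n(z+p):p\in Z_{ac}^n\}$.
   Context: For a complex vector space $Z$, $M_n(Z)$ is the $n\times n$ matrices over $Z$. A cone is a set $C$ with $C+C\subseteq C$, $tC\subseteq C$ for $t\ge0$; a matrix cone is a sequence of cones $C_n\subseteq M_n(Z)$ with $X^*C_nX\subseteq C_k$ for scalar $X\in M_{n,k}$; it is $\mathbb{C}$-proper if $C_1\cap-C_1\cap iC_1\cap-iC_1=\{0\}$, making $(Z,Z_{ac})$ an accretive matrix-ordered vector space. A matrix gauge is a sequence $\{\nu_n:M_n(Z)\to[0,\infty)\}$ with $\nu_n(x+y)\le\nu_n(x)+\nu_n(y)$, $\nu_n(tx)=t\nu_n(x)$ ($t\ge0$), $\nu_k(X^*AX)\le\|X\|^2\nu_n(A)$, $\nu_{n+m}(A\oplus B)=\max\{\nu_n(A),\nu_m(B)\}$; it is $\mathbb{C}$-proper if $\nu_1(i^kz)=0$ for $k=0,1,2,3$ implies $z=0$. A hermitian matrix gauge is a $\mathbb{C}$-proper matrix gauge with $h_n(tz)=|t|h_n(z)$ for real $t$. $Z_{ac}$ is $h$-closed if $z_k\in Z_{ac}^n$, $h_n(z_k-z)\to0$ imply $z\in Z_{ac}^n$. $(Z,Z_{ac},h)$ is a normal accretive operator space if $(Z,Z_{ac})$ is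 an accretive matrix-ordered vector space, $h$ is a hermitian matrix gauge, $Z_{ac}$ is $h$-closed, and $y-x,\ z-y\in Z_{ac}^n$ imply $h_n(y)\le\max\{h_n(x),h_n(z)\}$. A matrix gauge $\nu$ induces $(Z,Z_{ac},h)$ if $Z_{ac}^n=\{z:\nu_n(-z)=0\}$ and $h_n(z)=\max\{\nu_n(z),\nu_n(-z)\}$ for all $n,z$. *)

From HB Require Import structures.
From mathcomp Require Import all_boot all_order all_algebra.
Set Implicit Arguments. Unset Strict Implicit. Unset Printing Implicit Defensive.
Import Order.TTheory GRing.Theory Num.Theory.
Local Open Scope ring_scope.

Section Defs.
Variables (C : numClosedFieldType) (Z : lmodType C).

Definition mpred := forall n : nat, 'M[Z]_n -> Prop.
Definition mfun := forall n : nat, 'M[Z]_n -> C.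

Definition mscale (n : nat) (t : C) (A : 'M[Z]_n) : 'M[Z]_n :=
  map_mx (fun x => t *: x) A.

(* X^* A X for a scalar matrix X in M_{n,k}(C) and A in M_n(Z) *)
Definition congr_mx (n k : nat) (X : 'M[C]_(n, k)) (A : 'M[Z]_n) : 'M[Z]_k :=
  \matrix_(i, j) \sum_(p < n) \sum_(q < n) (((X p i)^* * X q j) *: A p q).

Definition sqnorm (k : nat) (v : 'cV[C]_k) : C := \sum_(i < k) `|v i 0| ^+ 2.

Definition opnorm_sq_le (n k : nat) (X : 'M[C]_(n, k)) (c : C) : Prop :=
  forall v : 'cV[C]_k, sqnorm (X *m v) <= c * sqnorm v.

Definition mx1 (z : Z) : 'M[Z]_1 := const_mx z.

Definition is_cone (n : nat) (K : 'M[Z]_n -> Prop) : Prop :=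
  (forall x y, K x -> K y -> K (x + y)) /\
  (forall (t : C) x, 0 <= t -> K x -> K (mscale t x)).

Definition matrix_cone (K : mpred) : Prop :=
  (forall n, (0 < n)%N -> is_cone (K n)) /\
  (forall (n k : nat) (X : 'M[C]_(n, k)) (A : 'M[Z]_n),
      (0 < n)%N -> (0 < k)%N -> K n A -> K k (congr_mx X A)).

Definition C_proper_cone (K : mpred) : Prop :=
  K 1%N 0 /\
  (forall z : 'M[Z]_1,
     K 1%N z -> K 1%N (- z) -> K 1%N (mscale (- 'i) z) -> K 1%N (mscale 'i z) ->
     z = 0).

Definition accretive_mxordered (K : mpred) : Prop :=
  matrix_cone K /\ C_proper_cone K.

Definition maxC (x y : C) : C := Num.max x y.

Definition matrix_gauge (nu : mfun) : Prop :=
  (forall n (x : 'M[Z]_n), (0 < n)%N -> 0 <= nu n x) /\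
  (forall n (x y : 'M[Z]_n), (0 < n)%N -> nu n (x + y) <= nu n x + nu n y) /\
  (forall n (t : C) (x : 'M[Z]_n), (0 < n)%N -> 0 <= t ->
      nu n (mscale t x) = t * nu n x) /\
  (forall (n k : nat) (X : 'M[C]_(n, k)) (A : 'M[Z]_n) (c : C),
      (0 < n)%N -> (0 < k)%N -> opnorm_sq_le X c ->
      nu k (congr_mx X A) <= c * nu n A) /\
  (forall (n m : nat) (A : 'M[Z]_n) (B : 'M[Z]_m),
      (0 < n)%N -> (0 < m)%N ->
      nu (n + m)%N (block_mx A 0 0 B) = maxC (nu n A) (nu m B)).

Definition C_proper_gauge (nu : mfun) : Prop :=
  forall z : Z, (forall k : nat, (k < 4)%N -> nu 1%N (mx1 ('i ^+ k *: z)) = 0) ->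
  z = 0.

Definition hermitian_matrix_gauge (h : mfun) : Prop :=
  matrix_gauge h /\ C_proper_gauge h /\
  (forall n (t : C) (z : 'M[Z]_n), (0 < n)%N -> t \is Num.real ->
      h n (mscale t z) = `|t| * h n z).

Definition h_closed (K : mpred) (h : mfun) : Prop :=
  forall n (u : nat -> 'M[Z]_n) (z : 'M[Z]_n), (0 < n)%N ->
    (forall k, K n (u k)) ->
    (forall e : C, 0 < e -> exists N : nat, forall k, (N <= k)%N -> h n (u k - z) < e) ->
    K n z.

Definition normal_accretive_operator_space (K : mpred) (h : mfun) : Prop :=
  accretive_mxordered K /\ hermitian_matrix_gauge h /\ h_closed K h /\
  (forall n (x y z : 'M[Z]_n), (0 < n)%N -> K n (y - x) -> K n (z - y) ->
      h n y <= maxC (h n x) (h n z)).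

Definition induces (nu : mfun) (K : mpred) (h : mfun) : Prop :=
  forall n (z : 'M[Z]_n), (0 < n)%N ->
    (K n z <-> nu n (- z) = 0) /\ h n z = maxC (nu n z) (nu n (- z)).

End Defs.

From Pilot Require Import Defs.
From mathcomp Require Import all_boot all_order all_algebra.
Import Order.TTheory GRing.Theory Num.Theory.
Local Open Scope ring_scope.

Set Implicit Arguments.

(* Since [p] is accretive, [nu (- p) = 0], so subadditivity gives
   [nu z <= nu (z + p) + nu (- p) = nu (z + p)], and [h] dominates [nu]. *)

Lemma maxC_gel (C : numClosedFieldType) (x y : C) : x <= Defs.maxC x y.
Proof. by rewrite /Defs.maxC Order.PreorderTheory.maxElt; case: ifP => // /ltW. Qed.

Lemma gauge_le_translate_null (C : numClosedFieldType) (Z : lmodType C)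
    (nu : mfun Z) (n : nat) (z p : 'M[Z]_n) :
  matrix_gauge nu -> (0 < n)%N -> nu n (- p) = 0 -> nu n z <= nu n (z + p).
Proof.
move=> [_ [nuD _]] n_gt0 nu_p0.
by have := nuD n (z + p) (- p) n_gt0; rewrite addrK nu_p0 addr0.
Qed.

Lemma induced_gauge_le (C : numClosedFieldType) (Z : lmodType C)
    (Zac : mpred Z) (h nu : mfun Z) (n : nat) (z : 'M[Z]_n) :
  induces nu Zac h -> (0 < n)%N -> nu n z <= h n z.
Proof. by move=> ind n_gt0; rewrite (proj2 (ind n z n_gt0)) maxC_gel. Qed.

Theorem proposition5p9 (C : numClosedFieldType) (Z : lmodType C)
    (Zac : mpred Z) (h nu : mfun Z) :
  normal_accretive_operator_space Zac h ->
  matrix_gauge nu ->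
  induces nu Zac h ->
  forall (n : nat) (z : 'M[Z]_n), (0 < n)%N ->
    forall p : 'M[Z]_n, Zac n p -> nu n z <= h n (z + p).
Proof.
move=> _ gauge_nu ind n z n_gt0 p Zac_p.
have nu_p0 : nu n (- p) = 0 by apply/(proj1 (ind n p n_gt0)).
apply: le_trans (induced_gauge_le _ ind n_gt0).
exact: gauge_le_translate_null.
Qed.
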